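(* Let $A$ be a finite subset of an abelian group $\mathbf G$, and let $n,m\ge1$ be integers. Then $$D_n(A)|A|^m\le D_{n+m}(A)\le D_n(A)D_m(A),$$ $$S_n(A)|A|^m\le S_{n+m}(A)\le S_n(A)\cdot\min\{S_m(A),D_m(A)\}.$$ Moreover, if $m\ge2$ then $D_n(A)|A|^m\le S_{n+m}(A)$, and if $m=1$ and $n\ge2$ then $D_{n-1}(A)|A|^2\le S_{n+1}(A)$.
   Context: For an integer $k\ge1$, $D_k(A)=|A^k-\Delta(A)|$ and $S_k(A)=|A^k+\Delta(A)|$, where $A^k\subseteq\mathbf G^k$ is the Cartesian power, $\Delta(A)=\{(a,\dots,a)\in\mathbf G^k:a\in A\}$, and sums/differences of subsets of $\mathbf G^k$ are taken coordinatewise, e.g. $A^k-\Delta(A)=\{(a_1-a,\dots,a_k-a):a,a_1,\dots,a_k\in A\}$. *)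

From HB Require Import structures.
From mathcomp Require Import all_boot all_order all_algebra finmap.
Set Implicit Arguments. Unset Strict Implicit. Unset Printing Implicit Defensive.
Import GRing.Theory.

Fixpoint cart_pow_seq (G : choiceType) (A : seq G) (k : nat) : seq (seq G) :=
  match k with
  | 0 => [:: [::]]
  | k'.+1 => [seq a :: t | a <- A, t <- cart_pow_seq A k']
  end.

(* A^k - Delta(A) = {(a_1 - a, ..., a_k - a) : a, a_i in A} *)
Local Open Scope fset_scope.
Definition diffset (G : zmodType) (A : {fset G}) (k : nat) : {fset seq G} :=
  [fset [seq (x - a)%R | x <- t] | t in cart_pow_seq (A : seq G) k, a in A].

(* A^k + Delta(A) = {(a_1 + a, ..., a_k + a) : a, a_i in A} *)
Definition sumset (G : zmodType) (A : {fset G}) (k : nat) : {fset seq G} :=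
  [fset [seq (x + a)%R | x <- t] | t in cart_pow_seq (A : seq G) k, a in A].

Definition D_ (G : zmodType) (k : nat) (A : {fset G}) : nat := #|` diffset A k|.
Definition S_ (G : zmodType) (k : nat) (A : {fset G}) : nat := #|` sumset A k|.

From HB Require Import structures.
From mathcomp Require Import all_boot all_order all_algebra finmap.
Set Implicit Arguments. Unset Strict Implicit. Unset Printing Implicit Defensive.
Import GRing.Theory.
Local Open Scope fset_scope.

(* Both A^k - Delta(A) and A^k + Delta(A) consist of the translates of points
   of A^k by a diagonal element of -A, resp. A.  Upper bounds: cut a point of
   A^(n+m) +- Delta(A) into its first n and its last m coordinates; for
   S_(n+m) <= S_n D_m, translate the last m coordinates by minus the first
   coordinate, which lies in A.  Lower bounds: anchor every x in
   A^n +- Delta(A) at some c in A with x -+ c in A^n, and extend x by the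
   translate by +-c of an arbitrary b in A^m; for D_n |A|^m <= S_(n+m), extend
   x + c by c itself followed by the tail of b and translate everything by the
   head of b, so that the inserted coordinate lets one recover c and hence x. *)

Lemma leq_mul_size_inj (T1 T2 U : eqType) (s1 : seq T1) (s2 : seq T2)
    (s : seq U) (h : T1 -> T2 -> U) :
  uniq s1 -> uniq s2 -> {in s1 & s2, forall x y, h x y \in s} ->
  {in s1 & s2, forall x y, {in s1 & s2, forall x' y',
     h x y = h x' y' -> x = x' /\ y = y'}} ->
  (size s1 * size s2 <= size s)%N.
Proof.
move=> s1u s2u hs hinj.
rewrite -(size_allpairs pair) -(size_map (fun p => h p.1 p.2)).
apply: uniq_leq_size.
  rewrite map_inj_in_uniq; first by apply: allpairs_uniq => // -[? ?] [? ?] _ _ [-> ->].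
  move=> [x y] [x' y'] /allpairsP[[? ?] [/= xs ys [-> ->]]].
  move=> /allpairsP[[? ?] [/= x's y's [-> ->]]] E.
  by have [-> ->] := hinj _ _ xs ys _ _ x's y's E.
by move=> _ /mapP[_ /allpairsP[[x y] [/= xs ys ->]] ->]; apply: hs.
Qed.

Lemma leq_size_mul_inj (T U1 U2 : eqType) (s : seq T) (s1 : seq U1)
    (s2 : seq U2) (h1 : T -> U1) (h2 : T -> U2) :
  uniq s -> {in s, forall z, h1 z \in s1} -> {in s, forall z, h2 z \in s2} ->
  {in s &, forall z z', h1 z = h1 z' -> h2 z = h2 z' -> z = z'} ->
  (size s <= size s1 * size s2)%N.
Proof.
move=> su h1s h2s inj.
rewrite -(size_allpairs pair) -(size_map (fun z => (h1 z, h2 z))).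
apply: uniq_leq_size.
  by rewrite map_inj_in_uniq // => z z' zs z's [] /(inj _ _ zs z's).
move=> _ /mapP[z zs ->]; apply/allpairsP.
by exists (h1 z, h2 z); rewrite h1s ?h2s.
Qed.

Section Shift.

Local Open Scope ring_scope.
Variable G : zmodType.
Implicit Types (a c : G) (t u : seq G).

Definition shift c t : seq G := [seq x + c | x <- t].

Lemma size_shift c t : size (shift c t) = size t.
Proof. exact: size_map. Qed.

Lemma shiftD a c t : shift a (shift c t) = shift (c + a) t.
Proof. by rewrite /shift -map_comp; apply: eq_map => x /=; rewrite addrA. Qed.

Lemma shift0 t : shift 0 t = t.
Proof. by rewrite /shift (eq_map (@addr0 G)) map_id. Qed.

Lemma shiftK a : cancel (shift a) (shift (- a)).
Proof. by move=> t; rewrite shiftD subrr shift0. Qed.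

Lemma shiftNK a : cancel (shift (- a)) (shift a).
Proof. by move=> t; rewrite shiftD addNr shift0. Qed.

Lemma shift_inj a : injective (shift a).
Proof. exact: can_inj (shiftK a). Qed.

Lemma shift_cat a t u : shift a (t ++ u) = shift a t ++ shift a u.
Proof. exact: map_cat. Qed.

Lemma take_shift k a t : take k (shift a t) = shift a (take k t).
Proof. by rewrite /shift map_take. Qed.

Lemma drop_shift k a t : drop k (shift a t) = shift a (drop k t).
Proof. by rewrite /shift map_drop. Qed.

End Shift.

Section CartesianPower.

Variables (T : choiceType) (A : seq T).
Implicit Types (t u : seq T).

Lemma mem_cart_pow_seq k t :
  (t \in cart_pow_seq A k) = (size t == k) && all (mem A) t.
Proof.
elim: k t => [|k IH] [|a u] //=.
  by apply/allpairsPdep => -[b [v [_ _]]].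
rewrite eqSS andbCA -IH.
apply/allpairsPdep/andP => [[b [v [bA vA [-> ->]]]] | [aA uA]].
  by rewrite bA vA.
by exists a, u.
Qed.

Lemma size_cart_pow_seq k : size (cart_pow_seq A k) = (size A ^ k)%N.
Proof. by elim: k => [|k IH] //=; rewrite size_allpairs IH expnS. Qed.

Lemma cart_pow_seq_uniq k : uniq A -> uniq (cart_pow_seq A k).
Proof.
move=> Au; elim: k => [|k IH] //=.
by apply: allpairs_uniq => // -[a u] [b v] _ _ /= [-> ->].
Qed.

Lemma mem_cart_pow_cons k a t :
  (a :: t \in cart_pow_seq A k.+1) = (a \in A) && (t \in cart_pow_seq A k).
Proof. by rewrite !mem_cart_pow_seq /= eqSS andbCA. Qed.

Lemma size_mem_cart_pow k t : t \in cart_pow_seq A k -> size t = k.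
Proof. by rewrite mem_cart_pow_seq => /andP[/eqP]. Qed.

Lemma mem_cart_pow_sub k t : t \in cart_pow_seq A k -> {subset t <= A}.
Proof. by rewrite mem_cart_pow_seq => /andP[_ /allP]. Qed.

Lemma cat_mem_cart_pow k l t u : t \in cart_pow_seq A k ->
  u \in cart_pow_seq A l -> t ++ u \in cart_pow_seq A (k + l).
Proof.
rewrite !mem_cart_pow_seq size_cat all_cat.
by move=> /andP[/eqP-> ->] /andP[/eqP-> ->]; rewrite eqxx.
Qed.

Lemma take_mem_cart_pow k l t :
  t \in cart_pow_seq A (k + l) -> take k t \in cart_pow_seq A k.
Proof.
rewrite !mem_cart_pow_seq size_take => /andP[/eqP-> tA].
have -> : all (mem A) (take k t) by apply/allP=> x /mem_take; apply/allP.
rewrite andbT; case: ltnP => //.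
by rewrite -[leqRHS]addn0 leq_add2l leqn0 => /eqP->; rewrite addn0.
Qed.

Lemma drop_mem_cart_pow k l t :
  t \in cart_pow_seq A (k + l) -> drop k t \in cart_pow_seq A l.
Proof.
rewrite !mem_cart_pow_seq size_drop => /andP[/eqP-> tA].
by rewrite addKn eqxx; apply/allP=> x /mem_drop; apply/allP.
Qed.

End CartesianPower.

Section ShiftedPower.

Local Open Scope ring_scope.
Variables (G : zmodType) (f : G -> G) (A : {fset G}).
Implicit Types (y t : seq G).

Definition shifted_pow k : {fset seq G} :=
  [fset shift (f a) t | t in cart_pow_seq (A : seq G) k, a in A].

Lemma shifted_powP k y :
  reflect (exists2 t, t \in cart_pow_seq A k & exists2 a, a \in A & y = shift (f a) t)
          (y \in shifted_pow k).
Proof.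
by apply: (iffP (imfset2P _ _ _ _ _)) => -[t tA [a aA ->]]; exists t => //; exists a.
Qed.

Lemma size_mem_shifted_pow k y : y \in shifted_pow k -> size y = k.
Proof. by move=> /shifted_powP[t /size_mem_cart_pow <- [a _ ->]]; apply: size_shift. Qed.

Lemma take_mem_shifted_pow n m y :
  y \in shifted_pow (n + m) -> take n y \in shifted_pow n.
Proof.
move=> /shifted_powP[t tA [a aA ->]]; apply/shifted_powP.
by exists (take n t); [exact: take_mem_cart_pow tA | exists a; rewrite ?take_shift].
Qed.

Lemma drop_mem_shifted_pow n m y :
  y \in shifted_pow (n + m) -> drop n y \in shifted_pow m.
Proof.
move=> /shifted_powP[t tA [a aA ->]]; apply/shifted_powP.
by exists (drop n t); [exact: drop_mem_cart_pow tA | exists a; rewrite ?drop_shift].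
Qed.

Definition anchor n y : G :=
  nth 0 A (find (fun c => shift (- f c) y \in cart_pow_seq A n) A).

Lemma anchorP n y : y \in shifted_pow n ->
  anchor n y \in A /\ shift (- f (anchor n y)) y \in cart_pow_seq A n.
Proof.
move=> /shifted_powP[t tA [a aA ->]].
have hasA : has (fun c => shift (- f c) (shift (f a) t) \in cart_pow_seq A n) A.
  by apply/hasP; exists a => //; rewrite shiftK.
by split; [rewrite /anchor mem_nth // -has_find | exact: (nth_find 0 hasA)].
Qed.

Lemma leq_shifted_pow_mul_card n m :
  (#|` shifted_pow n| * #|` A| ^ m <= #|` shifted_pow (n + m)|)%N.
Proof.
rewrite -size_cart_pow_seq.
apply: (leq_mul_size_inj (h := fun y b => y ++ shift (f (anchor n y)) b)).
- exact: fset_uniq.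
- exact: cart_pow_seq_uniq (fset_uniq A).
- move=> y b /anchorP[cA cy] bA; apply/shifted_powP.
  exists (shift (- f (anchor n y)) y ++ b); first exact: cat_mem_cart_pow.
  by exists (anchor n y) => //; rewrite shift_cat shiftNK.
- move=> y b /size_mem_shifted_pow sy _ y' b' /size_mem_shifted_pow sy' _ /eqP.
  rewrite eqseq_cat ?sy ?sy' // => /andP[/eqP eyy' /eqP]; subst y'.
  by move/shift_inj.
Qed.

Lemma leq_shifted_pow_add n m :
  (#|` shifted_pow (n + m)| <= #|` shifted_pow n| * #|` shifted_pow m|)%N.
Proof.
apply: (leq_size_mul_inj (h1 := take n) (h2 := drop n)).
- exact: fset_uniq.
- exact: take_mem_shifted_pow.
- exact: drop_mem_shifted_pow.
- move=> y y' _ _ eq_take eq_drop.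
  by rewrite -(cat_take_drop n y) eq_take eq_drop cat_take_drop.
Qed.

End ShiftedPower.

Section DiffsetSumset.

Local Open Scope ring_scope.
Variables (G : zmodType) (A : {fset G}).

Lemma diffsetE k : diffset A k = shifted_pow -%R A k.
Proof. by []. Qed.

Lemma sumsetE k : sumset A k = shifted_pow id A k.
Proof. by []. Qed.

Lemma leq_D_mul_card_pow n m : (D_ n A * #|` A| ^ m <= D_ (n + m) A)%N.
Proof. by rewrite /D_ !diffsetE leq_shifted_pow_mul_card. Qed.

Lemma leq_S_mul_card_pow n m : (S_ n A * #|` A| ^ m <= S_ (n + m) A)%N.
Proof. by rewrite /S_ !sumsetE leq_shifted_pow_mul_card. Qed.

Lemma leq_D_add n m : (D_ (n + m) A <= D_ n A * D_ m A)%N.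
Proof. by rewrite /D_ !diffsetE leq_shifted_pow_add. Qed.

Lemma leq_S_add n m : (S_ (n + m) A <= S_ n A * S_ m A)%N.
Proof. by rewrite /S_ !sumsetE leq_shifted_pow_add. Qed.

Lemma leq_S_add_D n m : (0 < n)%N -> (S_ (n + m) A <= S_ n A * D_ m A)%N.
Proof.
move=> n_gt0; rewrite /S_ /D_ !sumsetE diffsetE.
pose rebase (y : seq G) := shift (- nth 0 y 0) (drop n y).
apply: (leq_size_mul_inj (h1 := take n) (h2 := rebase)).
- exact: fset_uniq.
- exact: take_mem_shifted_pow.
- move=> _ /shifted_powP[t tA [a aA ->]]; apply/shifted_powP.
  have t_gt0 : (0 < size t)%N by rewrite (size_mem_cart_pow tA) ltn_addr.
  exists (drop n t); first exact: drop_mem_cart_pow tA.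
  exists (nth 0 t 0); first exact: mem_cart_pow_sub tA _ (mem_nth 0 t_gt0).
  by rewrite /rebase drop_shift shiftD (nth_map 0) // opprD addrCA subrr addr0.
- move=> y y' _ _ eq_take; have eq_head : nth 0 y 0 = nth 0 y' 0.
    by rewrite -(nth_take 0 n_gt0 y) eq_take nth_take.
  rewrite /rebase eq_head => /shift_inj eq_drop.
  by rewrite -(cat_take_drop n y) eq_take eq_drop cat_take_drop.
Qed.

Lemma leq_D_mul_card_pow_S n m : (0 < m)%N -> (D_ n A * #|` A| ^ m <= S_ (n + m) A)%N.
Proof.
case: m => // m _; rewrite /S_ /D_ sumsetE diffsetE -size_cart_pow_seq.
pose c x := anchor -%R A n x.
apply: (leq_mul_size_inj
  (h := fun x b => shift (head 0 b) (shift (c x) x ++ c x :: behead b))).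
- exact: fset_uniq.
- exact: cart_pow_seq_uniq (fset_uniq A).
- move=> x [|b0 r] /anchorP[cA cx]; first by rewrite mem_cart_pow_seq.
  rewrite mem_cart_pow_cons opprK /c in cx * => /andP[b0A rA].
  apply/shifted_powP; exists (shift (c x) x ++ c x :: r); last by exists b0.
  by rewrite cat_mem_cart_pow // mem_cart_pow_cons cA.
- move=> x b /size_mem_shifted_pow sx /size_mem_cart_pow sb.
  move=> x' b' /size_mem_shifted_pow sx' /size_mem_cart_pow sb'.
  case: b sb => // b0 r _; case: b' sb' => // b0' r' _ /=.
  rewrite !shift_cat !shiftD /= => /eqP.
  rewrite eqseq_cat ?size_shift ?sx ?sx' //.
  case/andP=> /eqP + /eqP[eq_head eq_tail].
  rewrite eq_head => /shift_inj eq_x; subst x'.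
  move/addrI: eq_head => eq_b0; subst b0'.
  by rewrite (shift_inj eq_tail).
Qed.

End DiffsetSumset.

Theorem proposition11 (G : zmodType) (A : {fset G}) (n m : nat) :
  (1 <= n)%N -> (1 <= m)%N ->
  [/\ (D_ n A * #|` A| ^ m <= D_ (n + m) A <= D_ n A * D_ m A)%N,
      (S_ n A * #|` A| ^ m <= S_ (n + m) A
         <= S_ n A * minn (S_ m A) (D_ m A))%N,
      ((2 <= m)%N -> (D_ n A * #|` A| ^ m <= S_ (n + m) A)%N)
    & (m = 1%N -> (2 <= n)%N -> (D_ n.-1 A * #|` A| ^ 2 <= S_ (n + 1) A)%N)].
Proof.
move=> n_gt0 m_gt0; split.
- by rewrite leq_D_mul_card_pow leq_D_add.
- rewrite leq_S_mul_card_pow /minn; case: ifP => _.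
    exact: leq_S_add.
  exact: leq_S_add_D.
- by move=> _; apply: leq_D_mul_card_pow_S.
- (* n >= 1 already suffices here *)
  move=> _ _; have -> : (n + 1 = n.-1 + 2)%N by rewrite addn2 addn1 prednK.
  exact: leq_D_mul_card_pow_S.
Qed.
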